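(* Let $\mathbf L$ be a locally compact non-discrete non-Archimedean field. Each uniform polyhedron $P$ over $\mathbf L$ is an ANRU.
   Context: A simplex over $\mathbf L$ is a closed ball $x+\pi^kB(c_0(\mathbf L,A'),0,1)$ ($\pi\in\mathbf L$ of maximal absolute value $<1$, $k\in\mathbb Z$) in a coordinate subspace $c_0(\mathbf L,A')$ of the Banach space $c_0(\mathbf L,A)$ (families in $\mathbf L$ tending to zero, sup norm). A polyhedron is a subset of $c_0(\mathbf L,A)$ which is a disjoint union of simplexes $s_i$, $i\in F$; it is uniform if $\sup_i\mathrm{diam}(s_i)<\infty$ and $\inf_{i\ne j}\mathrm{dist}(s_i,s_j)>0$. An ANRU is an ultrauniform space $X$ (uniformity generated by pseudoultrametrics) such that whenever $X$ is (uniformly) embedded into an ultrauniform space $Y$, there exist a uniform neighbourhood $V$ with $X\subset V\subset Y$ and a uniformly continuous retraction $r:V\to X$. *)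

From HB Require Import structures.
From mathcomp Require Import all_boot all_order all_algebra.
From Stdlib Require Lists.List.
From mathcomp Require Import boolp classical_sets cardinality reals.
Set Implicit Arguments. Unset Strict Implicit. Unset Printing Implicit Defensive.
Import Order.TTheory GRing.Theory Num.Theory.
Local Open Scope ring_scope.
Local Open Scope classical_set_scope.

Section Field.
Variables (R : realType) (K : fieldType) (abs : K -> R).

Definition nonarch_abs : Prop :=
  [/\ (forall x, 0 <= abs x),
      (forall x, abs x = 0 <-> x = 0),
      (forall x y, abs (x * y) = abs x * abs y) &
      (forall x y, abs (x + y) <= Num.max (abs x) (abs y))].

Definition open_in (U : set K) : Prop :=
  forall x, U x -> exists2 r : R, 0 < r & forall y, abs (y - x) < r -> U y.

Definition compact_in (S : set K) : Prop :=
  forall (I : Type) (U : I -> set K), (forall i, open_in (U i)) ->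
    (forall x, S x -> exists i, U i x) ->
    exists s : seq I, forall x, S x -> exists i, Stdlib.Lists.List.In i s /\ U i x.

Definition locally_compact_field : Prop :=
  forall x : K, exists2 r : R, 0 < r & compact_in [set y | abs (y - x) <= r].

Definition nondiscrete_field : Prop :=
  forall (x : K) (r : R), 0 < r -> exists y, y <> x /\ abs (y - x) < r.

Definition max_abs_lt1 (pi : K) : Prop :=
  abs pi < 1 /\ forall x, abs x < 1 -> abs x <= abs pi.

Variable A : Type.

Definition c0 (f : A -> K) : Prop :=
  forall eps : R, 0 < eps -> finite_set [set a | eps <= abs (f a)].

Definition c0dist (f g : A -> K) : R :=
  sup ([set 0] `|` range (fun a => abs (f a - g a))).

(* coordinate subspace c_0(L, A') (A' a subset of A) *)
Definition coord_sub (A' : set A) (f : A -> K) : Prop :=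
  forall a, ~ A' a -> f a = 0.

(* simplex x + pi^k B(c_0(L,A'),0,1) *)
Definition simplex (pi : K) (S : set (A -> K)) : Prop :=
  exists (A' : set A) (x : A -> K) (k : int),
    c0 x /\
    S = [set g | exists y, [/\ c0 y, coord_sub A' y,
                              c0dist y (fun _ => 0) <= 1 &
                              g = (fun a => x a + pi ^ k * y a)]].

Definition polyhedron_family (pi : K) (P : set (A -> K)) (F : Type)
    (s : F -> set (A -> K)) : Prop :=
  [/\ (forall i, simplex pi (s i)),
      (forall i j, i <> j -> s i `&` s j = set0) &
      P = [set f | exists i, s i f]].

Definition polyhedron (pi : K) (P : set (A -> K)) : Prop :=
  exists (F : Type) (s : F -> set (A -> K)), polyhedron_family pi P s.

Definition uniform_polyhedron (pi : K) (P : set (A -> K)) : Prop :=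
  exists (F : Type) (s : F -> set (A -> K)),
    [/\ polyhedron_family pi P s,
        (exists D : R, forall i f g, s i f -> s i g -> c0dist f g <= D) &
        (exists2 delta : R, 0 < delta & forall i j, i <> j ->
           forall f g, s i f -> s j g -> delta <= c0dist f g)].

End Field.

(* Uniform spaces given by a gauge (family of pseudometrics); the uniformity
   is the one generated by the gauge. *)
Record gauge_space (R : realType) := GaugeSpace {
  gs_car :> Type;
  gs_gauge : set (gs_car -> gs_car -> R) }.
Arguments gs_gauge {R} g _.

Section Uniform.
Variable R : realType.

Definition pseudoultrametric (T : Type) (d : T -> T -> R) : Prop :=
  [/\ (forall x y, 0 <= d x y), (forall x, d x x = 0),
      (forall x y, d x y = d y x) &
      (forall x y z, d x z <= Num.max (d x y) (d y z))].

Definition ultrauniform (X : gauge_space R) : Prop :=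
  forall d : X -> X -> R, gs_gauge X d -> pseudoultrametric d.

Definition entourage (X : gauge_space R) (E : X -> X -> Prop) : Prop :=
  exists n (ds : 'I_n -> X -> X -> R) (delta : R),
    [/\ 0 < delta, (forall i, gs_gauge X (ds i)) &
        forall x y, (forall i, ds i x y < delta) -> E x y].

Definition unif_cont (X Y : gauge_space R) (f : X -> Y) : Prop :=
  forall F, entourage F -> entourage (fun x x' => F (f x) (f x')).

Definition unif_embedding (X Y : gauge_space R) (e : X -> Y) : Prop :=
  [/\ injective e, unif_cont e &
      forall E, entourage E -> exists2 F, entourage F &
        forall x x', F (e x) (e x') -> E x x'].

Definition unif_nbhd (X Y : gauge_space R) (e : X -> Y) (V : set Y) : Prop :=
  exists2 F, entourage F & forall x y, F (e x) y -> V y.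

Definition unif_retraction (X Y : gauge_space R) (e : X -> Y) (V : set Y)
    (r : {y : Y | V y} -> X) : Prop :=
  (forall x (h : V (e x)), r (exist _ (e x) h) = x) /\
  (forall E, entourage E -> exists2 F, entourage F &
     forall y y' : {y : Y | V y}, F (proj1_sig y) (proj1_sig y') ->
       E (r y) (r y')).

Definition ANRU (X : gauge_space R) : Prop :=
  ultrauniform X /\
  forall (Y : gauge_space R) (e : X -> Y), ultrauniform Y -> unif_embedding e ->
    exists V : set Y, unif_nbhd e V /\
      exists r : {y : Y | V y} -> X, unif_retraction e r.

End Uniform.

Definition c0_subspace (R : realType) (K : fieldType) (abs : K -> R) (A : Type)
    (P : set (A -> K)) : gauge_space R :=
  @GaugeSpace R {f : A -> K | P f}
    [set fun x y : {f : A -> K | P f} => c0dist abs (proj1_sig x) (proj1_sig y)].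

From HB Require Import structures.
From mathcomp Require Import all_boot all_order all_algebra.
From mathcomp Require Import finmap boolp classical_sets cardinality reals.
From Stdlib Require ClassicalEpsilon.
Import Order.TTheory GRing.Theory Num.Theory.
Set Implicit Arguments. Unset Strict Implicit. Unset Printing Implicit Defensive.
Local Open Scope ring_scope.
Local Open Scope classical_set_scope.

(* A uniform polyhedron P is a complete ultrametric space for the sup-distance:
   the field is complete because it is locally compact, a Cauchy sequence of P
   eventually stays in one simplex since distinct simplexes are uniformly
   apart, and each simplex is closed.

   A complete ultrametric space X is an ANRU.  For a uniform embedding e of X
   into an ultrauniform space Y, pick a decreasing chain of entourages G_n of Y
   that are equivalence relations and pull back into the 1/(n+1)-balls of X.
   On the G_0-neighbourhood of e(X), send y to a point x lying within 1/(n+1)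
   of every x' with e x' G_n-related to y.  If y is G_n-close to e(X) for every
   n, the limit of a Cauchy sequence of witnesses is such an x; otherwise any
   witness at the last level m where y is G_m-close to e(X) works.  Points of
   the neighbourhood that are G_{n+1}-related are then sent to points at
   distance < 1/(n+1), so this map is a uniformly continuous retraction. *)

Lemma In_mem (T : eqType) (x : T) (s : seq T) : List.In x s -> x \in s.
Proof. by elim: s => //= y s IH [->|/IH xs]; rewrite inE ?eqxx ?xs ?orbT. Qed.

Lemma exists_last (P : nat -> Prop) n : P 0%N -> ~ P n -> exists m, P m /\ ~ P m.+1.
Proof.
move=> P0; elim: n => [//|n IH] nPn.
by have [Pn|nPn'] := EM (P n); [exists n | exact: IH].
Qed.

Section InvSucc.
Context {R : realType}.

Definition inv_succ (n : nat) : R := n.+1%:R^-1.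

Lemma inv_succ_gt0 n : 0 < inv_succ n.
Proof. by rewrite invr_gt0 ltr0Sn. Qed.

Lemma inv_succ_le m n : (m <= n)%N -> inv_succ n <= inv_succ m.
Proof. by move=> mn; rewrite lef_pV2 ?posrE ?ltr0Sn // ler_nat ltnS. Qed.

Lemma inv_succ_ltS n : inv_succ n.+1 < inv_succ n.
Proof. by rewrite ltf_pV2 ?posrE ?ltr0Sn // ltr_nat ltnS. Qed.

Lemma exists_inv_succ_lt (e : R) : 0 < e -> exists n, inv_succ n < e.
Proof.
move=> e0; have e'0 : 0 <= e^-1 by rewrite invr_ge0 ltW.
have := archi_boundP e'0; set m := Num.Def.archi_bound _ => lt_m; exists m.
rewrite -[e]invrK ltf_pV2 ?posrE ?ltr0Sn ?invr_gt0 //.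
by apply: lt_trans lt_m _; rewrite ltr_nat.
Qed.

Lemma le_inv_succ_le0 (t : R) N : (forall n, (N <= n)%N -> t <= inv_succ n) -> t <= 0.
Proof.
move=> le_t; rewrite leNgt; apply/negP => /exists_inv_succ_lt [m lt_m].
have := le_t (maxn m N) (leq_maxr _ _).
by rewrite leNgt (le_lt_trans (inv_succ_le (leq_maxl m N)) lt_m).
Qed.

(* Completeness, stated for Cauchy sequences with the fixed rate 1/(n+1);
   in a pseudometric space this is equivalent to ordinary completeness. *)
Definition cauchy_complete (T : Type) (d : T -> T -> R) : Prop :=
  forall u : nat -> T,
    (forall n k, (n <= k)%N -> d (u n) (u k) <= inv_succ n) ->
  exists z, forall n, d z (u n) <= inv_succ n.

End InvSucc.

Section NonArchimedeanAbs.
Variables (R : realType) (K : fieldType) (abs : K -> R).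
Hypothesis habs : nonarch_abs abs.

Lemma abs_ge0 x : 0 <= abs x.
Proof. by case: habs. Qed.

Lemma abs_eq0 x : abs x = 0 <-> x = 0.
Proof. by case: habs. Qed.

Lemma absM x y : abs (x * y) = abs x * abs y.
Proof. by case: habs. Qed.

Lemma abs0 : abs 0 = 0.
Proof. exact/abs_eq0. Qed.

Lemma abs_gt0 x : x != 0 -> 0 < abs x.
Proof.
by move=> x0; rewrite lt_neqAle abs_ge0 andbT eq_sym; apply: contra_neq x0 => /abs_eq0.
Qed.

Lemma abs1 : abs 1 = 1.
Proof.
apply: (mulfI (lt0r_neq0 (abs_gt0 (oner_neq0 K)))).
by rewrite -absM !mulr1.
Qed.

Lemma absN x : abs (- x) = abs x.
Proof.
apply/eqP; rewrite -(@eqrXn2 _ 2) ?abs_ge0 //.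
by rewrite !expr2 -!absM mulrNN.
Qed.

Lemma absB x y : abs (x - y) = abs (y - x).
Proof. by rewrite -absN opprB. Qed.

Lemma absV x : abs x^-1 = (abs x)^-1.
Proof.
have [->|x0] := eqVneq x 0; first by rewrite invr0 abs0 invr0.
have ax0 := lt0r_neq0 (abs_gt0 x0).
by apply: (mulfI ax0); rewrite -absM !divff // abs1.
Qed.

Lemma abs_ultra x y z : abs (x - z) <= Num.max (abs (x - y)) (abs (y - z)).
Proof. by case: habs => _ _ _ /(_ (x - y) (y - z)); rewrite addrA subrK. Qed.

Lemma abs_ultra_lt x y z e : abs (x - y) < e -> abs (y - z) < e -> abs (x - z) < e.
Proof. by move=> xy yz; apply: le_lt_trans (abs_ultra x y z) _; rewrite gt_max xy yz. Qed.

Lemma abs_ultra_le x y z e : abs (x - y) <= e -> abs (y - z) <= e -> abs (x - z) <= e.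
Proof. by move=> xy yz; apply: le_trans (abs_ultra x y z) _; rewrite ge_max xy yz. Qed.

(* Otherwise every point has a ball missing a tail of w; finitely many such
   balls cover S, and a late enough term of w lies in none of them. *)
Lemma compact_cauchy_limit (S : set K) (w : nat -> K) M :
  compact_in abs S -> (forall k, (M <= k)%N -> S (w k)) ->
  (forall n k, (n <= k)%N -> abs (w n - w k) <= inv_succ n) ->
  exists l, forall n, abs (l - w n) <= inv_succ n.
Proof.
move=> cS wS w_cauchy; apply: contrapT => no_limit.
have far l : exists n, inv_succ n < abs (l - w n).
  apply: contrapT => near; apply: no_limit; exists l => n.
  by rewrite leNgt; apply/negP => lt; apply: near; exists n.
have [n ltn] := choice far.
case: (cS K (fun l => [set z | abs (z - l) < inv_succ (n l)])).
- move=> l z /= zl; exists (inv_succ (n l)); first exact: inv_succ_gt0.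
  by move=> y yz; apply: abs_ultra_lt yz zl.
- by move=> z _; exists z; rewrite /= subrr abs0 inv_succ_gt0.
move=> s cover; pose N := maxn M (\max_(l <- s) n l)%N.
have [l [ls wNl]] := cover (w N) (wS N (leq_maxl _ _)).
have nlN : (n l <= N)%N.
  by apply: leq_trans (leq_maxr M _); apply: leq_bigmax_seq => //; apply: In_mem.
move: (ltn l); rewrite ltNge => /negP; apply.
apply: (@abs_ultra_le _ (w N)); first by rewrite absB ltW.
by rewrite absB; apply: w_cauchy.
Qed.

Lemma locally_compact_complete :
  locally_compact_field abs -> cauchy_complete (fun x y : K => abs (x - y)).
Proof.
move=> lc v v_cauchy; have [r r0 compact_ball] := lc 0.
have [M ltM] := exists_inv_succ_lt r0.
pose w k := v k - v M.
have w_cauchy n k : (n <= k)%N -> abs (w n - w k) <= inv_succ n.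
  by move=> nk; rewrite /w opprB addrA subrK; apply: v_cauchy.
have w_ball k : (M <= k)%N -> abs (w k - 0) <= r.
  move=> Mk; rewrite subr0 absB; apply: le_trans (ltW ltM).
  exact: v_cauchy.
have [l lim_l] := compact_cauchy_limit compact_ball w_ball w_cauchy.
by exists (l + v M) => n; move: (lim_l n); rewrite /w opprB addrA.
Qed.

End NonArchimedeanAbs.

Section C0.
Variables (R : realType) (K : fieldType) (abs : K -> R) (A : Type).
Hypothesis habs : nonarch_abs abs.
Implicit Types f g h : A -> K.

Lemma c0_0 : c0 abs (fun _ : A => 0).
Proof.
move=> e e0; apply: (@sub_finite_set _ _ set0); last exact: finite_set0.
by move=> a /=; rewrite abs0 // leNgt e0.
Qed.

Lemma c0_add f g : c0 abs f -> c0 abs g -> c0 abs (fun a => f a + g a).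
Proof.
move=> cf cg e e0.
apply: (@sub_finite_set _ _ ([set a | e <= abs (f a)] `|` [set a | e <= abs (g a)])).
  move=> a /= ea; case: habs => _ _ _ /(_ (f a) (g a)) /(le_trans ea).
  by rewrite le_max => /orP[]; [left|right].
by rewrite finite_setU; split; [apply: cf|apply: cg].
Qed.

Lemma c0_scale (c : K) g : c0 abs g -> c0 abs (fun a => c * g a).
Proof.
move=> cg e e0; have [->|c0] := eqVneq c 0.
  by under eq_fun do rewrite mul0r; exact: c0_0.
apply: (@sub_finite_set _ _ [set a | e / abs c <= abs (g a)]).
  by move=> a /=; rewrite absM // ler_pdivrMr ?abs_gt0 // mulrC.
by apply: cg; rewrite divr_gt0 ?abs_gt0.
Qed.

Lemma c0_sub f g : c0 abs f -> c0 abs g -> c0 abs (fun a => f a - g a).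
Proof.
move=> cf cg; apply: c0_add => // e e0.
by under eq_set do rewrite absN //; exact: cg.
Qed.

Lemma c0_bounded f : c0 abs f -> exists B, forall a, abs (f a) <= B.
Proof.
move=> cf; have /(finite_image (fun a => abs (f a))) := cf 1 ltr01.
move=> /finite_fsetP [X eX]; exists (\big[Num.max/1]_(x <- X) x) => a.
have [le1|lt1] := leP 1 (abs (f a)).
  have : [set` X] (abs (f a)) by rewrite -eX; exists a.
  by move=> Xfa; apply: le_bigmax_seq.
exact/(le_trans (ltW lt1))/bigmax_ge_id.
Qed.

Lemma c0dist_has_sup f g : c0 abs f -> c0 abs g ->
  has_sup ([set 0] `|` range (fun a => abs (f a - g a))).
Proof.
move=> cf cg; have [B leB] := c0_bounded (c0_sub cf cg).
split; first by exists 0; left.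
by exists (Num.max 0 B) => _ [->|[a _ <-]]; rewrite le_max ?lexx ?leB ?orbT.
Qed.

Lemma c0dist_ub f g a : c0 abs f -> c0 abs g -> abs (f a - g a) <= c0dist abs f g.
Proof. by move=> cf cg; apply: (sup_upper_bound (c0dist_has_sup cf cg)); right; exists a. Qed.

Lemma c0dist_ge0 f g : c0 abs f -> c0 abs g -> 0 <= c0dist abs f g.
Proof. by move=> cf cg; apply: (sup_upper_bound (c0dist_has_sup cf cg)); left. Qed.

Lemma c0dist_le f g (B : R) :
  0 <= B -> (forall a, abs (f a - g a) <= B) -> c0dist abs f g <= B.
Proof. by move=> B0 leB; apply: ge_sup => [|_ [->|[a _ <-]]] //; exists 0; left. Qed.

Lemma c0distC f g : c0dist abs f g = c0dist abs g f.
Proof. by rewrite /c0dist; under eq_fun do rewrite absB //. Qed.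

Lemma c0dist_ultra f g h : c0 abs f -> c0 abs g -> c0 abs h ->
  c0dist abs f h <= Num.max (c0dist abs f g) (c0dist abs g h).
Proof.
move=> cf cg ch; apply: c0dist_le => [|a]; first by rewrite le_max c0dist_ge0.
apply: le_trans (abs_ultra habs _ (g a) _) _.
by rewrite ge_max !le_max !c0dist_ub ?orbT.
Qed.

Lemma c0dist_le0 f g : c0 abs f -> c0 abs g -> c0dist abs f g <= 0 -> f = g.
Proof.
move=> cf cg le0; apply: funext => a; apply/eqP; rewrite -subr_eq0; apply/eqP.
apply/(abs_eq0 habs)/eqP; rewrite eq_le abs_ge0 // andbT.
exact: le_trans (c0dist_ub a cf cg) le0.
Qed.

Lemma c0dist_pseudoultrametric (P : set (A -> K)) : (forall f, P f -> c0 abs f) ->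
  pseudoultrametric (fun x y : {f | P f} => c0dist abs (proj1_sig x) (proj1_sig y)).
Proof.
move=> Pc0; split => [x y | x | x y | x y z].
- exact: c0dist_ge0 (Pc0 _ (proj2_sig x)) (Pc0 _ (proj2_sig y)).
- have cx := Pc0 _ (proj2_sig x).
  apply: le_anti; rewrite (c0dist_ge0 cx cx) andbT.
  by apply: c0dist_le => // a; rewrite subrr abs0.
- exact: c0distC.
- exact: c0dist_ultra (Pc0 _ (proj2_sig x)) (Pc0 _ (proj2_sig y)) (Pc0 _ (proj2_sig z)).
Qed.

End C0.

Section UniformPolyhedron.
Variables (R : realType) (K : fieldType) (abs : K -> R) (A : Type) (pi : K).
Hypothesis habs : nonarch_abs abs.

Lemma simplex_c0 (S : set (A -> K)) f : simplex abs pi S -> S f -> c0 abs f.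
Proof.
move=> [A' [x [k [cx ->]]]] [y [cy _ _ ->]].
by apply: c0_add => //; apply: c0_scale.
Qed.

Lemma uniform_polyhedron_c0 (P : set (A -> K)) f :
  uniform_polyhedron abs pi P -> P f -> c0 abs f.
Proof. by move=> [F [s [[s_simplex _ ->] _ _]]] [i sf]; exact: simplex_c0 (s_simplex i) sf. Qed.

Lemma unit_ball_closed (A' : set A) (w : A -> K) (y : nat -> A -> K) N :
  (forall n, (N <= n)%N -> [/\ c0 abs (y n), coord_sub A' (y n) &
                              c0dist abs (y n) (fun _ => 0) <= 1]) ->
  (forall e, 0 < e -> exists2 n, (N <= n)%N & forall a, abs (w a - y n a) < e) ->
  [/\ c0 abs w, coord_sub A' w & c0dist abs w (fun _ => 0) <= 1].
Proof.
move=> ball_y approx; split.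
- move=> e e0; have [n Nn close] := approx e e0; have [cy _ _] := ball_y n Nn.
  apply: sub_finite_set (cy e e0) => a /= ea; rewrite leNgt; apply/negP => lt.
  have lt' : abs (y n a - 0) < e by rewrite subr0.
  by move: (abs_ultra_lt habs (close a) lt'); rewrite subr0 ltNge ea.
- move=> a na; apply/(abs_eq0 habs)/eqP; rewrite eq_le abs_ge0 // andbT.
  apply: (le_inv_succ_le0 (N := 0)) => k _.
  have [n Nn close] := approx _ (inv_succ_gt0 k); have [_ sub_y _] := ball_y n Nn.
  by move: (close a); rewrite sub_y // subr0 => /ltW.
- apply: c0dist_le => [|a]; first exact: ler01.
  have [n Nn close] := approx 1 ltr01; have [cy _ norm_y] := ball_y n Nn.
  apply: (abs_ultra_le habs (ltW (close a))).
  exact: le_trans (c0dist_ub habs a cy (c0_0 A habs)) norm_y.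
Qed.

Lemma simplex_closed (S : set (A -> K)) (u : nat -> A -> K) z N :
  simplex abs pi S -> (forall n, (N <= n)%N -> S (u n)) ->
  (forall n a, abs (z a - u n a) <= inv_succ n) -> S z.
Proof.
move=> [A' [x [k [cx ->]]]]; set c := pi ^ k => uS z_lim.
have [c0|cn0] := eqVneq c 0.
  have u_x n a : (N <= n)%N -> u n a = x a.
    by move=> Nn; have [y [_ _ _ ->]] := uS n Nn; rewrite c0 mul0r addr0.
  exists (fun _ => 0); split; first exact: c0_0.
  - by [].
  - by apply: c0dist_le ler01 _ => a; rewrite subrr abs0 ?ler01.
  apply: funext => a; rewrite mulr0 addr0; apply/eqP; rewrite -subr_eq0; apply/eqP.
  apply/(abs_eq0 habs)/eqP; rewrite eq_le abs_ge0 // andbT.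
  apply: (le_inv_succ_le0 (N := N)) => n Nn.
  by rewrite -(u_x n a Nn); apply: z_lim.
have u_ball n : (N <= n)%N -> [/\ c0 abs (fun a => (u n a - x a) / c),
    coord_sub A' (fun a => (u n a - x a) / c) &
    c0dist abs (fun a => (u n a - x a) / c) (fun _ => 0) <= 1].
  move=> Nn; have [y [cy sy ny ->]] := uS n Nn.
  suff -> : (fun a => (x a + c * y a - x a) / c) = y by [].
  by apply: funext => a; rewrite addrC addKr mulrC mulKf.
have approx e : 0 < e -> exists2 n, (N <= n)%N &
    forall a, abs ((z a - x a) / c - (u n a - x a) / c) < e.
  move=> e0; have [n lt_n] := exists_inv_succ_lt (mulr_gt0 (abs_gt0 habs cn0) e0).
  exists (maxn n N); first exact: leq_maxr.
  move=> a; rewrite -mulrBl opprB addrA subrK absM // absV //.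
  rewrite ltr_pdivrMr ?abs_gt0 // mulrC; apply: le_lt_trans (z_lim _ a) _.
  exact: le_lt_trans (inv_succ_le (leq_maxl n N)) lt_n.
have [cw sw nw] := unit_ball_closed u_ball approx.
exists (fun a => (z a - x a) / c); split => //.
by apply: funext => a; rewrite mulrC divfK // addrC subrK.
Qed.

Lemma c0_cauchy_pointwise_limit (u : nat -> A -> K) :
  locally_compact_field abs -> (forall n, c0 abs (u n)) ->
  (forall n k, (n <= k)%N -> c0dist abs (u n) (u k) <= inv_succ n) ->
  exists z, forall n a, abs (z a - u n a) <= inv_succ n.
Proof.
move=> lc cu u_cauchy.
have lim a : exists l, forall n, abs (l - u n a) <= inv_succ n.
  apply: (locally_compact_complete habs lc) => n k nk.
  exact: le_trans (c0dist_ub habs a (cu n) (cu k)) (u_cauchy n k nk).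
by have [z lim_z] := choice lim; exists z => n a; apply: lim_z.
Qed.

Lemma uniform_polyhedron_complete (P : set (A -> K)) :
  locally_compact_field abs -> uniform_polyhedron abs pi P ->
  cauchy_complete (fun x y : {f | P f} => c0dist abs (proj1_sig x) (proj1_sig y)).
Proof.
move=> lc P_unif u u_cauchy.
have cu n : c0 abs (proj1_sig (u n)) := uniform_polyhedron_c0 P_unif (proj2_sig (u n)).
have [z lim_z] := c0_cauchy_pointwise_limit lc cu u_cauchy.
suff Pz : P z.
  by exists (exist _ z Pz) => n; apply: c0dist_le (ltW (inv_succ_gt0 n)) _.
case: P_unif => F [s [[s_simplex _ eP] _ [delta delta0 sep]]].
have piece f : P f -> exists i, s i f by rewrite eP.
have [N ltN] := exists_inv_succ_lt delta0.
have [i uNi] := piece _ (proj2_sig (u N)).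
have u_i k : (N <= k)%N -> s i (proj1_sig (u k)).
  move=> Nk; have [j ukj] := piece _ (proj2_sig (u k)).
  have [-> //|ij] := EM (i = j).
  by have := sep i j ij _ _ uNi ukj; rewrite leNgt (le_lt_trans (u_cauchy N k Nk) ltN).
by rewrite eP; exists i; exact: simplex_closed (s_simplex i) u_i lim_z.
Qed.

End UniformPolyhedron.

Section EquivalenceEntourages.
Variables (R : realType) (Y : gauge_space R).

Definition equiv_entourage (H : Y -> Y -> Prop) : Prop :=
  [/\ entourage H, (forall y, H y y), (forall y y', H y y' -> H y' y) &
      (forall y y' y'', H y y' -> H y' y'' -> H y y'')].

Lemma entourage_sub (H H' : Y -> Y -> Prop) :
  entourage H -> (forall y y', H y y' -> H' y y') -> entourage H'.
Proof.
move=> [n [ds [d [d0 gauge_ds sub]]]] HH'.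
by exists n, ds, d; split => // y y' /sub /HH'.
Qed.

Lemma entourage_meet (H H' : Y -> Y -> Prop) :
  entourage H -> entourage H' -> entourage (fun y y' => H y y' /\ H' y y').
Proof.
move=> [n [ds [d [d0 gauge_ds sub]]]] [n' [ds' [d' [d'0 gauge_ds' sub']]]].
pose dd (i : 'I_(n + n')) := match split i with inl j => ds j | inr j => ds' j end.
exists (n + n')%N, dd, (Num.min d d'); split.
- by rewrite lt_min d0 d'0.
- by move=> i; rewrite /dd; case: (split i).
move=> y y' lt_dd; split; [apply: sub => j | apply: sub' => j].
  by have := lt_dd (lshift n' j); rewrite /dd (unsplitK (inl j)) lt_min => /andP[].
by have := lt_dd (rshift n j); rewrite /dd (unsplitK (inr j)) lt_min => /andP[].
Qed.

Lemma entourage_bigmeet (H : nat -> Y -> Y -> Prop) n :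
  (forall m, entourage (H m)) -> entourage (fun y y' => forall m, (m <= n)%N -> H m y y').
Proof.
move=> entH; elim: n => [|n IH].
  by apply: entourage_sub (entH 0%N) _ => y y' H0y m; rewrite leqn0 => /eqP ->.
apply: entourage_sub (entourage_meet IH (entH n.+1)) _ => y y' [Hy Hy1] m.
by rewrite leq_eqVlt => /predU1P [-> //|]; apply: Hy.
Qed.

Lemma gauge_ball_equiv_entourage n (ds : 'I_n -> Y -> Y -> R) (d : R) :
  ultrauniform Y -> 0 < d -> (forall i, gs_gauge Y (ds i)) ->
  equiv_entourage (fun y y' => forall i, ds i y y' < d).
Proof.
move=> ultraY d0 gauge_ds; split.
- by exists n, ds, d.
- by move=> y i; have [_ -> _ _] := ultraY _ (gauge_ds i).
- by move=> y y' lt_d i; have [_ _ -> _] := ultraY _ (gauge_ds i).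
- move=> y y' y'' lt_d lt_d' i; have [_ _ _ ultra] := ultraY _ (gauge_ds i).
  by apply: le_lt_trans (ultra y y' y'') _; rewrite gt_max lt_d lt_d'.
Qed.

End EquivalenceEntourages.

Section CompleteUltrametricANRU.
Variables (R : realType) (X : gauge_space R) (d : X -> X -> R).
Hypotheses (gauge_X : gs_gauge X = [set d]) (d_ultra : pseudoultrametric d)
  (d_sep : forall x x', d x x' <= 0 -> x = x') (d_complete : cauchy_complete d).

Lemma d_ultra_le x x' x'' e : d x x' <= e -> d x' x'' <= e -> d x x'' <= e.
Proof.
have [_ _ _ ultra] := d_ultra.
by move=> le le'; apply: le_trans (ultra x x' x'') _; rewrite ge_max le le'.
Qed.

Lemma entourage_ball n : entourage (fun x x' : X => d x x' < inv_succ n).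
Proof.
exists 1%N, (fun _ => d), (inv_succ n); rewrite gauge_X; split => //.
  exact: inv_succ_gt0.
by move=> x x'; apply; exact: ord0.
Qed.

Lemma entourage_sub_ball (E : X -> X -> Prop) :
  entourage E -> exists n, forall x x', d x x' < inv_succ n -> E x x'.
Proof.
move=> [k [ds [delta [delta0 gauge_ds sub]]]].
have [n lt_n] := exists_inv_succ_lt delta0.
exists n => x x' lt_x; apply: sub => i.
by move: (gauge_ds i); rewrite gauge_X => ->; apply: lt_trans lt_n.
Qed.

Section Embedding.
Variables (Y : gauge_space R) (e : X -> Y).
Hypotheses (ultra_Y : ultrauniform Y) (emb_e : unif_embedding e).

Lemma embedding_chain : exists G : nat -> Y -> Y -> Prop,
  [/\ forall n, equiv_entourage (G n),
      forall m n y y', (m <= n)%N -> G n y y' -> G m y y' &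
      forall n x x', G n (e x) (e x') -> d x x' < inv_succ n].
Proof.
have pullback n : exists H : Y -> Y -> Prop, equiv_entourage H /\
    forall x x', H (e x) (e x') -> d x x' < inv_succ n.
  case: emb_e => _ _ /(_ _ (entourage_ball n)).
  move=> [F [k [ds [delta [delta0 gauge_ds sub]]]] FE].
  exists (fun y y' => forall i, ds i y y' < delta).
  by split; [exact: gauge_ball_equiv_entourage | move=> x x' /sub /FE].
have [H H_pullback] := choice pullback.
exists (fun n y y' => forall m, (m <= n)%N -> H m y y'); split.
- move=> n; split.
  + by apply: entourage_bigmeet => m; have [[]] := H_pullback m.
  + by move=> y m _; have [[]] := H_pullback m.
  + by move=> y y' Hy m mn; have [[_ _ sym _] _] := H_pullback m; apply/sym/Hy.
  + move=> y y' y'' Hy Hy' m mn; have [[_ _ _ trans] _] := H_pullback m.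
    exact: trans (Hy m mn) (Hy' m mn).
- by move=> m n y y' mn Hy k km; apply: Hy (leq_trans km mn).
- by move=> n x x' Hx; apply: (H_pullback n).2; apply: Hx.
Qed.

Section Retraction.
Variable G : nat -> Y -> Y -> Prop.
Hypotheses (G_equiv : forall n, equiv_entourage (G n))
  (G_anti : forall m n y y', (m <= n)%N -> G n y y' -> G m y y')
  (G_e : forall n x x', G n (e x) (e x') -> d x x' < inv_succ n).

Let G_refl n y : G n y y.
Proof. by case: (G_equiv n). Qed.

Let G_sym n y y' : G n y y' -> G n y' y.
Proof. by case: (G_equiv n) => _ _ sym _; apply: sym. Qed.

Let G_trans n y y' y'' : G n y y' -> G n y' y'' -> G n y y''.
Proof. by case: (G_equiv n) => _ _ _ trans; apply: trans. Qed.

Definition near_image (y : Y) : Prop := exists x, G 0 (e x) y.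

Definition best_approx (y : Y) (x : X) : Prop :=
  forall n x', G n (e x') y -> d x x' <= inv_succ n.

Lemma best_approx_exists y : near_image y -> exists x, best_approx y x.
Proof.
move=> [x0 G0x0].
have [close|/existsNP [n far]] := EM (forall n, exists x, G n (e x) y).
  have [xs G_xs] := choice close.
  have [z lim_z] : exists z, forall n, d z (xs n) <= inv_succ n.
    apply: d_complete => n k nk; apply/ltW/G_e.
    exact: G_trans (G_xs n) (G_sym (G_anti nk (G_xs k))).
  exists z => n x' Gx'; apply: d_ultra_le (lim_z n) _.
  exact/ltW/G_e/(G_trans (G_xs n) (G_sym Gx')).
have [m [[x Gx] far_m]] :=
  exists_last (P := fun n => exists x, G n (e x) y) (ex_intro _ x0 G0x0) far.
exists x => k x' Gx'; have [km|mk] := leqP k m.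
  exact/ltW/G_e/(G_trans (G_anti km Gx) (G_sym Gx')).
by case: far_m; exists x'; apply: G_anti mk Gx'.
Qed.

Let near_image_inhabited y : near_image y -> inhabited X.
Proof. by case=> x _; exists. Qed.

Definition retraction (yv : {y | near_image y}) : X :=
  ClassicalEpsilon.epsilon (near_image_inhabited (proj2_sig yv))
    (best_approx (proj1_sig yv)).

Lemma retraction_best_approx yv : best_approx (proj1_sig yv) (retraction yv).
Proof.
apply: ClassicalEpsilon.epsilon_spec.
exact: best_approx_exists (proj2_sig yv).
Qed.

Lemma retraction_id_on_image x (h : near_image (e x)) :
  retraction (exist _ (e x) h) = x.
Proof.
apply: d_sep; apply: (le_inv_succ_le0 (N := 0)) => n _.
exact: retraction_best_approx.
Qed.

(* Far from e(X), the levels at which y and y' are close to e(X) are all <= n+1,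
   and there G_{n+1}-related points are interchangeable. *)
Lemma best_approx_far y y' n : ~ (exists x, G n.+1 (e x) y) -> G n.+1 y y' ->
  best_approx y = best_approx y'.
Proof.
move=> far Gyy'; apply/funext => x; apply/propext.
split=> approx k x' Gx'; apply: approx; have [kn|nk] := leqP k n.+1.
- exact: G_trans Gx' (G_sym (G_anti kn Gyy')).
- by case: far; exists x'; apply: G_trans (G_anti (ltnW nk) Gx') (G_sym Gyy').
- exact: G_trans Gx' (G_anti kn Gyy').
- by case: far; exists x'; apply: G_anti (ltnW nk) Gx'.
Qed.

Lemma retraction_lipschitz (yv yv' : {y | near_image y}) n :
  G n.+1 (proj1_sig yv) (proj1_sig yv') ->
  d (retraction yv) (retraction yv') < inv_succ n.
Proof.
move=> Gyy'; apply: le_lt_trans (inv_succ_ltS n).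
have [[x' Gx']|far] := EM (exists x, G n.+1 (e x) (proj1_sig yv)).
  have [_ _ dC _] := d_ultra.
  apply: d_ultra_le (retraction_best_approx Gx') _; rewrite dC.
  exact: retraction_best_approx (G_trans Gx' Gyy').
have -> : retraction yv = retraction yv'.
  rewrite /retraction (best_approx_far far Gyy').
  by congr ClassicalEpsilon.epsilon; exact: Prop_irrelevance.
by have [_ -> _ _] := d_ultra; exact/ltW/inv_succ_gt0.
Qed.

End Retraction.

Lemma embedding_retract : exists V : set Y, unif_nbhd e V /\
  exists r : {y | V y} -> X, unif_retraction e r.
Proof.
have [G [G_equiv G_anti G_e]] := embedding_chain.
exists (near_image G); split.
  by exists (G 0%N); [case: (G_equiv 0%N) | move=> x y Gxy; exists x].
exists (retraction (G := G)); split=> [x h | E entE]; first exact: retraction_id_on_image.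
have [n ball_E] := entourage_sub_ball entE.
exists (G n.+1); first by case: (G_equiv n.+1).
by move=> yv yv' Gyy'; apply/ball_E/retraction_lipschitz.
Qed.

End Embedding.

Theorem complete_ultrametric_ANRU : ANRU X.
Proof.
split=> [d' | Y e ultra_Y emb_e]; first by rewrite gauge_X => ->.
exact: embedding_retract.
Qed.

End CompleteUltrametricANRU.

Theorem theorem2p11 (R : realType) (K : fieldType) (abs : K -> R) (pi : K)
    (A : Type) (P : set (A -> K)) :
  nonarch_abs abs -> locally_compact_field abs -> nondiscrete_field abs ->
  max_abs_lt1 abs pi ->
  uniform_polyhedron abs pi P ->
  ANRU (c0_subspace abs P).
Proof.
move=> habs lc _ _ P_unif.
have Pc0 f : P f -> c0 abs f := uniform_polyhedron_c0 habs P_unif.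
apply: (@complete_ultrametric_ANRU _ (c0_subspace abs P)
  (fun x y => c0dist abs (proj1_sig x) (proj1_sig y))) => //.
- exact: c0dist_pseudoultrametric.
- move=> [f Pf] [g Pg] /= le0; apply: eq_exist.
  exact: c0dist_le0 (Pc0 _ Pf) (Pc0 _ Pg) le0.
- exact (uniform_polyhedron_complete habs lc P_unif).
Qed.
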